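(* Let $M$ be the monoid presented by $\langle a,b,c\mid ac=ca,\ bc=cb,\ cab=cbb\rangle$. The infinite rewriting system over $\{a,b,c\}$ with rules $ac\to ca$, $bc\to cb$, and $cuab\to cubb$ for every $u\in\{a,b\}^*$ (the case $u=\varepsilon$ being $cab\to cbb$) is a complete (noetherian and confluent) rewriting system presenting $M$, and its set of irreducible words is $\{a,b\}^*\cup c^+b^*a^*$. *)

From Stdlib Require Export List Relations.
Export ListNotations.

Inductive letter : Type := a | b | c.
Definition word := list letter.

Definition ab_word (u : word) : Prop := Forall (fun x => x = a \/ x = b) u.

Inductive ruleR : word -> word -> Prop :=
| rule_ac : ruleR [a; c] [c; a]
| rule_bc : ruleR [b; c] [c; b]
| rule_cuab : forall u, ab_word u -> ruleR (c :: u ++ [a; b]) (c :: u ++ [b; b]).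

Inductive relM : word -> word -> Prop :=
| rel_ac : relM [a; c] [c; a]
| rel_bc : relM [b; c] [c; b]
| rel_cab : relM [c; a; b] [c; b; b].

Definition step_of (rl : word -> word -> Prop) (w w' : word) : Prop :=
  exists x y l r, rl l r /\ w = x ++ l ++ y /\ w' = x ++ r ++ y.

Definition stepR := step_of ruleR.

(* the monoid congruence (Thue congruence) generated by a set of rules/relations;
   two words are equal in the presented monoid iff they are congruent *)
Definition thue_cong (rl : word -> word -> Prop) : word -> word -> Prop :=
  clos_refl_sym_trans word (step_of rl).

Definition noetherian (st : word -> word -> Prop) : Prop :=
  well_founded (fun v u => st u v).

Definition confluent (st : word -> word -> Prop) : Prop :=
  forall u v w, clos_refl_trans word st u v -> clos_refl_trans word st u w ->
    exists z, clos_refl_trans word st v z /\ clos_refl_trans word st w z.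

Definition irreducible (st : word -> word -> Prop) (w : word) : Prop :=
  forall w', ~ st w w'.

Definition normal_forms (w : word) : Prop :=
  ab_word w \/ exists n m k, w = repeat c (S n) ++ repeat b m ++ repeat a k.

From Stdlib Require Import Arith Lia Bool Sorted Classical.

(* Every rule strictly decreases the number of a's plus the number of pairs "a or b
   before c", so R is noetherian.  Every rule preserves the length, the number of c's
   (which is positive) and the number of a's standing after the last b, and these three
   numbers determine a unique word of c^+ b^* a^*; such words are irreducible, since a
   left-hand side always contains one of the factors ac, bc, ab.  Reducing to an
   irreducible word therefore always yields the same word, which gives confluence.  The
   Thue congruences agree because c commutes with every word of {a,b}^* modulo ac = ca,
   bc = cb, so that cuab = ucab = ucbb = cubb. *)

Section ConfluenceOfNormalForm.

Variables (A : Type) (R : A -> A -> Prop) (nf : A -> A).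
Hypothesis R_wf : well_founded (fun v u => R u v).
Hypothesis nf_step : forall u v, R u v -> nf u = nf v.
Hypothesis nf_irreducible : forall u, (forall v, ~ R u v) -> nf u = u.

Lemma nf_rt u v : clos_refl_trans A R u v -> nf u = nf v.
Proof. induction 1; auto; congruence. Qed.

Lemma rt_nf u : clos_refl_trans A R u (nf u).
Proof.
  induction (R_wf u) as [u _ IH].
  destruct (classic (exists v, R u v)) as [[v Huv] | Hirr].
  - rewrite (nf_step _ _ Huv).
    exact (rt_trans _ _ _ _ _ (rt_step _ _ _ _ Huv) (IH v Huv)).
  - rewrite (nf_irreducible u) by (intros v Huv; eauto). apply rt_refl.
Qed.

Lemma confluence_of_nf u v w :
  clos_refl_trans A R u v -> clos_refl_trans A R u w ->
  exists z, clos_refl_trans A R v z /\ clos_refl_trans A R w z.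
Proof.
  intros Hv Hw. exists (nf u). split.
  - rewrite (nf_rt _ _ Hv). apply rt_nf.
  - rewrite (nf_rt _ _ Hw). apply rt_nf.
Qed.

End ConfluenceOfNormalForm.

Section ThueCongruence.

Variable rl : word -> word -> Prop.

Lemma step_of_ctx x y l r : rl l r -> step_of rl (x ++ l ++ y) (x ++ r ++ y).
Proof. intros Hlr. exists x, y, l, r. auto. Qed.

Lemma step_of_rule l r : rl l r -> step_of rl l r.
Proof. intros Hlr. exists [], [], l, r. rewrite !app_nil_r. auto. Qed.

Lemma thue_cong_ctx x y v w :
  thue_cong rl v w -> thue_cong rl (x ++ v ++ y) (x ++ w ++ y).
Proof.
  induction 1 as [v w (x' & y' & l & r & Hlr & -> & ->) | | |].
  - apply rst_step. rewrite <- !app_assoc.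
    exists (x ++ x'), (y' ++ y), l, r. rewrite <- !app_assoc. auto.
  - apply rst_refl.
  - apply rst_sym; assumption.
  - eapply rst_trans; eassumption.
Qed.

Lemma thue_cong_app_l x v w : thue_cong rl v w -> thue_cong rl (x ++ v) (x ++ w).
Proof.
  intros H. rewrite <- (app_nil_r v), <- (app_nil_r w). exact (thue_cong_ctx x [] v w H).
Qed.

End ThueCongruence.

Lemma thue_cong_mono (rl1 rl2 : word -> word -> Prop) :
  (forall l r, rl1 l r -> thue_cong rl2 l r) ->
  forall u v, thue_cong rl1 u v -> thue_cong rl2 u v.
Proof.
  intros Hsub u v. induction 1 as [v w (x & y & l & r & Hlr & -> & ->) | | |].
  - apply thue_cong_ctx, Hsub, Hlr.
  - apply rst_refl.
  - apply rst_sym; assumption.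
  - eapply rst_trans; eassumption.
Qed.

Lemma c_comm_ab_word u v : ab_word u -> thue_cong relM (c :: u ++ v) (u ++ c :: v).
Proof.
  induction 1 as [|x u Hx Hu IH].
  - apply rst_refl.
  - apply (rst_trans _ _ _ (x :: c :: u ++ v)).
    + apply rst_sym, rst_step.
      apply (step_of_ctx relM [] (u ++ v) [x; c] [c; x]).
      destruct Hx as [-> | ->]; constructor.
    + exact (thue_cong_app_l relM [x] _ _ IH).
Qed.

Lemma ruleR_in_relM l r : ruleR l r -> thue_cong relM l r.
Proof.
  intros [| | u Hu]; try (apply rst_step, step_of_rule; constructor).
  apply (rst_trans _ _ _ (u ++ [c; a; b])); [exact (c_comm_ab_word u _ Hu)|].
  apply (rst_trans _ _ _ (u ++ [c; b; b])).
  - apply thue_cong_app_l, rst_step, step_of_rule. constructor.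
  - apply rst_sym. exact (c_comm_ab_word u _ Hu).
Qed.

Lemma relM_in_ruleR l r : relM l r -> thue_cong ruleR l r.
Proof.
  intros []; apply rst_step, step_of_rule; try constructor.
  apply (rule_cuab []). constructor.
Qed.

Definition letter_eq_dec (x y : letter) : {x = y} + {x <> y}.
Proof. decide equality. Defined.

Definition occ (x : letter) (w : word) : nat := count_occ letter_eq_dec w x.

Lemma occ_app x u v : occ x (u ++ v) = occ x u + occ x v.
Proof. apply count_occ_app. Qed.

Fixpoint inversions (w : word) : nat :=
  match w with
  | [] => 0
  | c :: s => inversions s
  | _ :: s => occ c s + inversions s
  end.

Lemma inversions_app u v :
  inversions (u ++ v) = inversions u + (occ a u + occ b u) * occ c v + inversions v.
Proof.
  induction u as [|[] u IH]; simpl; rewrite ?IH; unfold occ; simpl;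
    rewrite ?count_occ_app; nia.
Qed.

Definition weight (w : word) : nat := occ a w + inversions w.

(* ac -> ca and bc -> cb each remove one inversion; cuab -> cubb removes an a and moves
   no c. *)
Lemma weight_step w w' : stepR w w' -> weight w' < weight w.
Proof.
  intros (x & y & l & r & Hlr & -> & ->). unfold weight.
  destruct Hlr as [| | u _]; rewrite !inversions_app; simpl; rewrite ?inversions_app;
    unfold occ; rewrite !count_occ_app; simpl; rewrite ?count_occ_app; simpl; nia.
Qed.

Lemma stepR_noetherian : noetherian stepR.
Proof. exact (Wf_nat.well_founded_lt_compat _ weight _ (fun v u => weight_step u v)). Qed.

Fixpoint has_b (w : word) : bool :=
  match w with
  | [] => false
  | b :: _ => true
  | _ :: s => has_b s
  end.

Fixpoint a_after_last_b (w : word) : nat :=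
  match w with
  | [] => 0
  | a :: s => if has_b s then a_after_last_b s else S (a_after_last_b s)
  | _ :: s => a_after_last_b s
  end.

Lemma has_b_app u v : has_b (u ++ v) = has_b u || has_b v.
Proof. induction u as [|[] u IH]; simpl; auto. Qed.

Lemma a_after_last_b_app u v :
  a_after_last_b (u ++ v) =
  if has_b v then a_after_last_b v else a_after_last_b u + a_after_last_b v.
Proof.
  induction u as [|[] u IH]; simpl; auto.
  - destruct (has_b v); reflexivity.
  - rewrite has_b_app, IH. destruct (has_b u), (has_b v); reflexivity.
Qed.

Lemma stepR_invariants w w' : stepR w w' ->
  occ c w' = occ c w /\ length w' = length w /\ a_after_last_b w' = a_after_last_b w /\
  occ c w <> 0.
Proof.
  intros (x & y & l & r & Hlr & -> & ->).
  assert (Hl : occ c r = occ c l /\ length r = length l /\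
               a_after_last_b r = a_after_last_b l /\ has_b r = has_b l /\ occ c l <> 0).
  { destruct Hlr as [| | u _]; unfold occ; simpl; auto.
    rewrite !count_occ_app, !length_app, !a_after_last_b_app, !has_b_app; simpl.
    rewrite orb_true_r. repeat split; lia. }
  destruct Hl as (Hc & Hlen & Ha & Hb & Hc0).
  rewrite !occ_app, !length_app, !a_after_last_b_app, !has_b_app, Ha, Hb.
  repeat split; lia.
Qed.

Definition nf (w : word) : word :=
  if occ c w =? 0 then w
  else repeat c (occ c w) ++ repeat b (length w - occ c w - a_after_last_b w)
       ++ repeat a (a_after_last_b w).

Lemma nf_step w w' : stepR w w' -> nf w = nf w'.
Proof.
  intros Hs. destruct (stepR_invariants _ _ Hs) as (Hc & Hlen & Ha & Hc0).
  unfold nf. rewrite Hc, Hlen, Ha. apply Nat.eqb_neq in Hc0. rewrite Hc0. reflexivity.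
Qed.

Lemma has_b_repeat_a k : has_b (repeat a k) = false.
Proof. induction k; simpl; auto. Qed.

Lemma a_after_last_b_repeat x k :
  a_after_last_b (repeat x k) = if letter_eq_dec x a then k else 0.
Proof.
  induction k as [|k IH]; destruct x; simpl in *; auto.
  rewrite has_b_repeat_a, IH. reflexivity.
Qed.

Lemma occ_c_ab_word w : ab_word w -> occ c w = 0.
Proof.
  intros Hw. apply count_occ_not_In. intros Hc.
  unfold ab_word in Hw. rewrite Forall_forall in Hw. destruct (Hw c Hc); discriminate.
Qed.

Lemma nf_normal_form w : normal_forms w -> nf w = w.
Proof.
  unfold nf. intros [Hab | (n & m & k & ->)].
  - rewrite occ_c_ab_word by exact Hab. reflexivity.
  - assert (Hc : occ c (repeat c (S n) ++ repeat b m ++ repeat a k) = S n).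
    { unfold occ. rewrite !count_occ_app, count_occ_repeat_eq, !count_occ_repeat_neq;
        auto; discriminate. }
    assert (Ha : a_after_last_b (repeat c (S n) ++ repeat b m ++ repeat a k) = k).
    { rewrite !a_after_last_b_app, !has_b_app, has_b_repeat_a, !a_after_last_b_repeat.
      destruct (has_b (repeat b m)); reflexivity. }
    rewrite Hc, Ha, !length_app, !repeat_length.
    replace (S n + (m + k) - S n - k) with m by lia. reflexivity.
Qed.

Section SortedFactors.

Variables (A : Type) (R : A -> A -> Prop).

Lemma Sorted_adjacent x p q y : Sorted R (x ++ p :: q :: y) -> R p q.
Proof.
  induction x as [|z x IH]; intros Hs; apply Sorted_inv in Hs as [Hs Hhd].
  - exact (HdRel_inv Hhd).
  - exact (IH Hs).
Qed.

Lemma Sorted_repeat_app x n w :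
  R x x -> Sorted R w -> HdRel R x w -> Sorted R (repeat x n ++ w).
Proof.
  intros Hxx Hw Hhd. induction n as [|n IH]; simpl; auto.
  apply Sorted_cons; auto. destruct n; simpl; auto.
Qed.

End SortedFactors.

(* c^+ b^* a^* is the set of words that contain c and are sorted for c < b < a. *)
Definition rank (x : letter) : nat := match x with c => 0 | b => 1 | a => 2 end.

Definition rank_le (x y : letter) : Prop := rank x <= rank y.

Lemma Sorted_cba n m k : Sorted rank_le (repeat c n ++ repeat b m ++ repeat a k).
Proof.
  assert (Hle : forall x, rank_le x x) by (intros x; unfold rank_le; lia).
  assert (Hab : Sorted rank_le (repeat b m ++ repeat a k)).
  { apply Sorted_repeat_app; auto.
    - rewrite <- (app_nil_r (repeat a k)). apply Sorted_repeat_app; auto.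
    - destruct k; constructor. unfold rank_le; simpl; lia. }
  apply Sorted_repeat_app; auto.
  destruct m, k; constructor; unfold rank_le; simpl; lia.
Qed.

Lemma ruleR_lhs_has_c l r : ruleR l r -> In c l.
Proof. intros []; simpl; auto. Qed.

Lemma ruleR_lhs_unsorted l r : ruleR l r ->
  exists x p q y, l = x ++ p :: q :: y /\ ~ rank_le p q.
Proof.
  unfold rank_le. intros [| | u _].
  - exists [], a, c, []. simpl; split; auto; lia.
  - exists [], b, c, []. simpl; split; auto; lia.
  - exists (c :: u), a, b, []. simpl; split; auto; lia.
Qed.

Lemma normal_forms_irreducible w : normal_forms w -> irreducible stepR w.
Proof.
  intros Hw w' (x & y & l & r & Hlr & -> & _).
  destruct Hw as [Hab | (n & m & k & Hw)].
  - unfold ab_word in Hab. rewrite Forall_forall in Hab.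
    destruct (Hab c) as [H | H]; try discriminate.
    apply in_or_app. right. apply in_or_app. left. exact (ruleR_lhs_has_c l r Hlr).
  - destruct (ruleR_lhs_unsorted l r Hlr) as (x' & p & q & y' & -> & Hpq).
    apply Hpq. apply (Sorted_adjacent _ _ (x ++ x') p q (y' ++ y)).
    rewrite <- !app_assoc in Hw |- *. simpl in Hw |- *.
    rewrite Hw. apply (Sorted_cba (S n)).
Qed.

Lemma irreducible_app_l x w : irreducible stepR (x ++ w) -> irreducible stepR w.
Proof.
  intros Hirr w' (x' & y & l & r & Hlr & -> & ->).
  apply (Hirr (x ++ x' ++ r ++ y)). rewrite !app_assoc.
  exists (x ++ x'), y, l, r. rewrite <- !app_assoc. auto.
Qed.

Lemma ab_word_cases s : ab_word s ->
  (exists m k, s = repeat b m ++ repeat a k) \/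
  (exists u v, ab_word u /\ s = u ++ [a; b] ++ v).
Proof.
  induction 1 as [|z s Hz Hs [(m & k & ->) | (u & v & Hu & ->)]].
  - left. exists 0, 0. reflexivity.
  - destruct Hz as [-> | ->].
    + destruct m as [|m].
      * left. exists 0, (S k). reflexivity.
      * right. exists [], (repeat b m ++ repeat a k). split; [constructor | reflexivity].
    + left. exists (S m), k. reflexivity.
  - right. exists (z :: u), v. split; [constructor; auto | reflexivity].
Qed.

Lemma irreducible_normal_form w : irreducible stepR w -> normal_forms w.
Proof.
  induction w as [|z w IH]; intros Hirr; [left; constructor|].
  specialize (IH (irreducible_app_l [z] w Hirr)).
  destruct z; destruct IH as [Hab | (n & m & k & ->)].
  - left. constructor; auto.
  - exfalso. apply (Hirr ([c; a] ++ repeat c n ++ repeat b m ++ repeat a k)).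
    exact (step_of_ctx _ [] _ _ _ rule_ac).
  - left. constructor; auto.
  - exfalso. apply (Hirr ([c; b] ++ repeat c n ++ repeat b m ++ repeat a k)).
    exact (step_of_ctx _ [] _ _ _ rule_bc).
  - right. destruct (ab_word_cases w Hab) as [(m & k & ->) | (u & v & Hu & ->)].
    + exists 0, m, k. reflexivity.
    + exfalso. apply (Hirr ((c :: u ++ [b; b]) ++ v)). rewrite app_comm_cons, app_assoc.
      exact (step_of_ctx _ [] _ _ _ (rule_cuab u Hu)).
  - right. exists (S n), m, k. reflexivity.
Qed.

Lemma stepR_confluent : confluent stepR.
Proof.
  exact (confluence_of_nf word stepR nf stepR_noetherian nf_step
           (fun w Hw => nf_normal_form w (irreducible_normal_form w Hw))).
Qed.

Theorem lemma3p10 :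
  noetherian stepR /\ confluent stepR /\
  (forall u v, thue_cong ruleR u v <-> thue_cong relM u v) /\
  (forall w, irreducible stepR w <-> normal_forms w).
Proof.
  split; [exact stepR_noetherian|]. split; [exact stepR_confluent|]. split.
  - intros u v. split; apply thue_cong_mono; auto using ruleR_in_relM, relM_in_ruleR.
  - intros w. split; auto using irreducible_normal_form, normal_forms_irreducible.
Qed.
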